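(* Let $f\colon\mathbb{N}\to\mathbb{N}$ be a growth function, $d$ a positive integer, and $\psi=\psi_{d,f}$. If $(N_1,\dots,N_d),(M_1,\dots,M_d)\in\mathbb{N}^d$ satisfy $\sum_iN_i\le\sum_iM_i$ and $(N_1,\dots,N_d)\le(M_1,\dots,M_d)$ in the inverse lexicographic order, then $\psi(N_1,\dots,N_d)\le\psi(M_1,\dots,M_d)$.
   Context: A growth function is a non-decreasing $f\colon\mathbb{N}\to\mathbb{N}$ with $f(r)\ge r$ for all $r$ ($\mathbb{N}$ includes $0$). Inverse lexicographic order on $\mathbb{N}^d$: $\vec N<\vec M$ if at the largest index $j$ with $N_j\ne M_j$ one has $N_j<M_j$. $\psi_{d,f}\colon\mathbb{N}^d\to\mathbb{N}$ is defined recursively: $\psi_{d,f}(M_1,0,\dots,0)=M_1$; otherwise, if $\ell\ge2$ is the smallest index with $M_\ell>0$, $\psi_{d,f}(M_1,\dots,M_d)=\psi_{d,f}(M_1,\dots,M_{\ell-1}+f(\sum_iM_i),M_\ell-1,M_{\ell+1},\dots,M_d)$. *)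

(* vectors in N^d are lists [:: M_1; ...; M_d]
   of naturals of size d; coordinate i (1-based in the paper) is nth 0 M (i-1). *)
From Stdlib Require Import Wf_nat.
From mathcomp Require Import all_boot.
Set Implicit Arguments. Unset Strict Implicit. Unset Printing Implicit Defensive.

Definition growth (f : nat -> nat) : Prop :=
  (forall m n, m <= n -> f m <= f n) /\ (forall r, r <= f r).

Definition invlex_lt (N M : seq nat) : Prop :=
  size N = size M /\
  exists j, [/\ j < size M, nth 0 N j < nth 0 M j &
                forall i, j < i < size M -> nth 0 N i = nth 0 M i].

Definition invlex_le (N M : seq nat) : Prop := N = M \/ invlex_lt N M.

Definition terminal (M : seq nat) : bool := all (fun x => x == 0) (behead M).

(* one step of the recursion: l (0-based) is the smallest index >= 1 with
   M_l > 0; M_{l-1} += f (sum M), M_l -= 1 *)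
Definition psi_step (f : nat -> nat) (M : seq nat) : seq nat :=
  let l := (find (fun x => x != 0) (behead M)).+1 in
  set_nth 0 (set_nth 0 M l.-1 (nth 0 M l.-1 + f (sumn M))) l (nth 0 M l).-1.

Lemma invlex_lt_rcons (s s' : seq nat) a a' :
  invlex_lt (rcons s' a') (rcons s a) ->
  a' < a \/ (a' = a /\ invlex_lt s' s).
Proof.
move=> [Hs0 [j [Hj Hlt Heq]]].
move/eqP: Hs0; rewrite !size_rcons eqSS => /eqP Hs.
move: Hj Hlt Heq; rewrite size_rcons ltnS leq_eqVlt => /orP[/eqP Ej|Hj].
  by rewrite !nth_rcons Ej Hs ltnn eqxx => Hlt _; left.
move=> Hlt Heq; right.
have Ea : a' = a.
  have := Heq (size s); rewrite ltnSn Hj !nth_rcons Hs ltnn eqxx.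
  by move=> /(_ isT).
split=> //; split=> //; exists j; split=> //.
  by move: Hlt; rewrite !nth_rcons Hs Hj.
move=> i /andP[Hji Hin]; have := Heq i.
rewrite Hji (ltn_trans Hin (ltnSn _)) !nth_rcons Hs Hin.
by move=> /(_ isT).
Qed.

Lemma invlex_lt_size (N M : seq nat) : invlex_lt N M -> size N = size M.
Proof. by case. Qed.

Lemma invlex_lt_wf : well_founded invlex_lt.
Proof.
have H : forall n M, size M = n -> Acc invlex_lt M.
  elim=> [|n IH] M.
    move/size0nil=> ->; constructor=> M' [_ [j [] ]]; by [].
  case/lastP: M => [//|s a]; rewrite size_rcons => -[Hs].
move: a s Hs; apply: (@well_founded_ind nat lt Wf_nat.lt_wf) => a IHa s Hs.
  have As := IH s Hs.
  elim: As Hs => {}s _ IHs Hs.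
  constructor=> M' HM'.
  have := invlex_lt_size HM'; case/lastP: M' HM' => [|s' a'].
    by rewrite size_rcons.
  rewrite !size_rcons => HM' [Hs']; case: (invlex_lt_rcons HM') => [Ha|[Ea Hss]].
    by apply: IHa; [apply/ltP | rewrite Hs'].
  rewrite Ea; apply: IHs; [exact: Hss | by rewrite Hs'].
apply: (fun M => H (size M) M erefl).
Qed.

Lemma psi_step_lt (f : nat -> nat) (M : seq nat) :
  terminal M = false -> invlex_lt (psi_step f M) M.
Proof.
move=> HT.
have Hh : has (fun x => x != 0) (behead M).
  by apply/hasP; move/negbT/allPn: HT => [x Hx /= Hx0]; exists x.
set k := find (fun x => x != 0) (behead M).
have Hk : k < size (behead M) by rewrite -has_find.
have Hnz : nth 0 M k.+1 != 0 by rewrite -nth_behead; exact: (nth_find 0 Hh).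
have HkM : k.+1 < size M by move: Hk; rewrite size_behead; case: (size M).
rewrite /psi_step -/k /=.
split.
  rewrite !size_set_nth (maxn_idPr (ltnW HkM)); exact: (maxn_idPr HkM).
exists k.+1; split=> //.
  by rewrite nth_set_nth /= eqxx prednK ?lt0n // ltnSn.
move=> i /andP[Hki HiM].
have H1 : i != k.+1 by rewrite neq_ltn Hki orbT.
have H2 : i != k by rewrite neq_ltn (ltn_trans (ltnSn k) Hki) orbT.
by rewrite nth_set_nth /= (negbTE H1) nth_set_nth /= (negbTE H2).
Qed.

Definition psi_G (f : nat -> nat) (M : seq nat)
  (rec : forall M', invlex_lt M' M -> nat) (b : bool) (e : terminal M = b) : nat :=
  (if b as b' return terminal M = b' -> nat
   then fun _ => head 0 M
   else fun H => rec (psi_step f M) (psi_step_lt f H)) e.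

Definition psi_F (f : nat -> nat) (M : seq nat)
  (rec : forall M', invlex_lt M' M -> nat) : nat :=
  psi_G f rec erefl.

Definition psi (f : nat -> nat) (M : seq nat) : nat :=
  Fix invlex_lt_wf (fun _ => nat) (psi_F f) M.

Lemma psiE (f : nat -> nat) (M : seq nat) :
  psi f M = if terminal M then head 0 M else psi f (psi_step f M).
Proof.
rewrite /psi Fix_eq /psi_F.
  have K : forall b (e : terminal M = b),
     psi_G f (fun y _ => Fix invlex_lt_wf (fun _ => nat) (psi_F f) y) e =
     if b then head 0 M else Fix invlex_lt_wf (fun _ => nat) (psi_F f) (psi_step f M).
    by case.
  exact: K.
move=> x g h Hgh; rewrite /psi_F.
have K : forall b (e : terminal x = b), psi_G f g e = psi_G f h e.
  by case=> e //=; apply: Hgh.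
exact: K.
Qed.

From mathcomp Require Import all_boot zify.
Set Implicit Arguments. Unset Strict Implicit. Unset Printing Implicit Defensive.

(* Induction on M along the well-founded inverse lexicographic order.  If M is
   terminal, so is N, and psi is the coordinate sum.  Otherwise
   psi(M) = psi(M') for M' the one-step successor of M, and sum M' >= sum M
   since f(s) >= s >= 1.  If N differs from M only in its first coordinate, N
   steps at the same index and its successor stays pointwise below M'.
   Otherwise N stays invlex-below M' itself: the step only changes coordinates
   l - 1 and l, and if N_l = M'_l then sum N <= sum M <= f(sum M) <= M'_(l-1)
   forces N below M' at l - 1, or N concentrated at l - 1. *)

Lemma leq_nth_sumn s i : nth 0 s i <= sumn s.
Proof.
elim: s i => [|a s IHs] [|i] //=; first exact: leq_addr.
exact: leq_trans (IHs i) (leq_addl _ _).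
Qed.

Lemma leq_nth_add_sumn s i k : i != k -> nth 0 s i + nth 0 s k <= sumn s.
Proof.
elim: s i k => [|a s IHs] [|i] [|k] //= ik; rewrite ?addn0 //.
- by rewrite leq_add2l leq_nth_sumn.
- by rewrite addnC leq_add2l leq_nth_sumn.
- exact: leq_trans (IHs i k ik) (leq_addl _ _).
Qed.

Lemma leq_nth_eq_behead N M : behead N = behead M -> sumn N <= sumn M ->
  forall i, nth 0 N i <= nth 0 M i.
Proof.
move=> eqNM le_sumn [|i]; last by rewrite -!nth_behead eqNM.
by move: eqNM le_sumn; case: N M => [|a N] [|b M] //= ->; rewrite ?addn0 ?leq_add2r.
Qed.

Lemma invlex_lt_at N M j :
  size N = size M -> nth 0 N j < nth 0 M j ->
  (forall i, j < i -> nth 0 N i = nth 0 M i) -> invlex_lt N M.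
Proof.
move=> eq_size ltNMj eq_above; split=> //; exists j; split=> //.
- by rewrite ltnNge; apply: contraTN ltNMj => /(nth_default 0) ->.
- by move=> i /andP[ji _]; apply: eq_above.
Qed.

Lemma invlex_lt_witness N M : invlex_lt N M ->
  exists j, nth 0 N j < nth 0 M j /\ forall i, j < i -> nth 0 N i = nth 0 M i.
Proof.
move=> [eq_size [j [jM ltNMj eq_above]]]; exists j; split=> // i ji.
have [iM|Mi] := ltnP i (size M); first by apply: eq_above; rewrite ji.
by rewrite !nth_default ?eq_size.
Qed.

Lemma invlex_lt_behead_neq N M : invlex_lt N M -> behead N != behead M ->
  exists j, [/\ 0 < j, nth 0 N j < nth 0 M j &
                 forall i, j < i -> nth 0 N i = nth 0 M i].
Proof.
move=> /[dup] /invlex_lt_size eq_size.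
move=> /invlex_lt_witness [[|j] [ltNMj eq_above]] neqNM; last by exists j.+1.
case/eqP: neqNM; apply: (@eq_from_nth _ 0) => [|i _].
  by rewrite !size_behead eq_size.
by rewrite !nth_behead eq_above.
Qed.

Lemma invlex_le_pointwise N M : size N = size M ->
  (forall i, nth 0 N i <= nth 0 M i) -> invlex_le N M.
Proof.
elim: N M => [|a N IHN] [|b M] //=; first by left.
move=> [eq_size] leNM.
have [<-|ltNM] := IHN M eq_size (fun i => leNM i.+1).
  have [->|ltab] := eqVneq a b; first by left.
  right; apply: (@invlex_lt_at _ _ 0) => [|/=|[|i] //]; rewrite ?eq_size //.
  by rewrite ltn_neqAle ltab (leNM 0).
right; have [j [ltNMj eq_above]] := invlex_lt_witness ltNM.
apply: (@invlex_lt_at _ _ j.+1) => //=; first by rewrite eq_size.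
by move=> [|i] //= ji; apply: eq_above.
Qed.

(* Either [N_k < M_k], or [N_k = sumn N] and all other coordinates of [N]
   vanish. *)
Lemma invlex_le_sumn_le_nth N M k : size N = size M ->
  (forall i, k < i -> nth 0 N i = nth 0 M i) -> sumn N <= nth 0 M k ->
  invlex_le N M.
Proof.
move=> eq_size eq_above sumN_le.
have [ltNMk|leMNk] := ltnP (nth 0 N k) (nth 0 M k).
  by right; apply: invlex_lt_at ltNMk eq_above.
apply: invlex_le_pointwise => // i.
have [->|ik] := eqVneq i k; first exact: leq_trans (leq_nth_sumn _ _) sumN_le.
have [ki|] := ltnP k i; first by rewrite eq_above.
have := leq_nth_add_sumn N ik; lia.
Qed.

Lemma terminal_behead N M : behead N = behead M -> terminal N = terminal M.
Proof. by rewrite /terminal => ->. Qed.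

Lemma sumn_terminal M : terminal M -> sumn M = head 0 M.
Proof.
by case: M => [|a M] //; rewrite /terminal /= => /all_pred1P ->; rewrite sumn_nseq addn0.
Qed.

Lemma terminal_nth M j : 0 < j -> nth 0 M j != 0 -> terminal M = false.
Proof.
case: j => // j _ Mj; apply/negbTE/negP => /(all_nthP 0) M0.
have jM : j < size (behead M).
  by rewrite ltnNge; apply: contra Mj => /(nth_default 0); rewrite nth_behead => ->.
by move: Mj (M0 j jM); rewrite nth_behead => /negbTE ->.
Qed.

Lemma has_nonzero_behead M : terminal M = false -> has (fun x => x != 0) (behead M).
Proof. by move/negbT; rewrite -has_predC. Qed.

Section PsiStep.

Variable f : nat -> nat.

(* Coordinate [(step_index M).+1], counting from 0, is the paper's [M_l]. *)
Definition step_index (M : seq nat) := find (fun x => x != 0) (behead M).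

Lemma psi_terminal M : terminal M -> psi f M = sumn M.
Proof. by move=> TM; rewrite psiE TM sumn_terminal. Qed.

Lemma step_index_lt M : terminal M = false -> (step_index M).+1 < size M.
Proof.
move/has_nonzero_behead; rewrite has_find size_behead.
by case: (size M).
Qed.

Lemma nth_step_index_neq0 M : terminal M = false -> nth 0 M (step_index M).+1 != 0.
Proof.
by move/has_nonzero_behead; rewrite -nth_behead; apply: nth_find.
Qed.

Lemma step_index_min M j : 0 < j -> nth 0 M j != 0 -> step_index M < j.
Proof.
case: j => // j _ Mj; rewrite ltnS leqNgt; apply/negP => /(before_find 0).
by rewrite nth_behead Mj.
Qed.

Lemma nth_psi_step M i : nth 0 (psi_step f M) i =
  if i == (step_index M).+1 then (nth 0 M (step_index M).+1).-1
  else if i == step_index M then nth 0 M (step_index M) + f (sumn M)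
  else nth 0 M i.
Proof. by rewrite /psi_step /= nth_set_nth /=; case: ifP => // _; rewrite nth_set_nth. Qed.

Lemma nth_psi_step_above M i : (step_index M).+1 < i ->
  nth 0 (psi_step f M) i = nth 0 M i.
Proof.
by move=> lt_i; rewrite nth_psi_step gtn_eqF // gtn_eqF // ltnW.
Qed.

Lemma size_psi_step M : terminal M = false -> size (psi_step f M) = size M.
Proof.
move=> /step_index_lt lt_size; rewrite /psi_step /= !size_set_nth.
by rewrite (maxn_idPr (ltnW lt_size)) (maxn_idPr lt_size).
Qed.

Lemma sumn_psi_step M : terminal M = false ->
  sumn (psi_step f M) = sumn M + f (sumn M) - 1.
Proof.
move=> TM; rewrite /psi_step /= !sumn_set_nth0 nth_set_nth /= -/(step_index M).
by rewrite (gtn_eqF (ltnSn _)); have := nth_step_index_neq0 TM; lia.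
Qed.

Hypothesis f_growth : growth f.

Lemma leq_sumn_psi_step M : terminal M = false -> sumn M <= sumn (psi_step f M).
Proof.
move=> TM; have := nth_step_index_neq0 TM.
have := leq_nth_sumn M (step_index M).+1; have := f_growth.2 (sumn M).
rewrite sumn_psi_step //; lia.
Qed.

Lemma invlex_le_psi_step_behead N M :
  terminal M = false -> size N = size M -> behead N = behead M ->
  sumn N <= sumn M -> invlex_le (psi_step f N) (psi_step f M).
Proof.
move=> TM eq_size eqNM le_sumn.
have TN : terminal N = false by rewrite (terminal_behead eqNM).
have leNM := leq_nth_eq_behead eqNM le_sumn.
have le_f := f_growth.1 _ _ le_sumn.
apply: invlex_le_pointwise => [|i]; first by rewrite !size_psi_step.
rewrite !nth_psi_step.
have -> : step_index N = step_index M by rewrite /step_index eqNM.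
case: ifP => _; first by rewrite -!nth_behead eqNM.
by case: ifP => _; [apply: leq_add | apply: leNM].
Qed.

Lemma invlex_le_psi_step N M j : size N = size M -> sumn N <= sumn M ->
  0 < j -> nth 0 N j < nth 0 M j -> (forall i, j < i -> nth 0 N i = nth 0 M i) ->
  invlex_le N (psi_step f M).
Proof.
move=> eq_size le_sumn j0 ltNMj eq_above.
have Mj : nth 0 M j != 0 by rewrite -lt0n (leq_ltn_trans (leq0n _) ltNMj).
have TM := terminal_nth j0 Mj.
have := step_index_min j0 Mj; set k := step_index M => kj.
have eq_size' : size N = size (psi_step f M) by rewrite size_psi_step.
have eq_above' i : j < i -> nth 0 N i = nth 0 (psi_step f M) i.
  by move=> ji; rewrite nth_psi_step_above ?eq_above //; apply: leq_trans ji.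
have [jk|kj'] := eqVneq j k.+1; last first.
  right; apply: (@invlex_lt_at _ _ j) => //.
  by rewrite nth_psi_step_above // ltn_neqAle eq_sym kj' kj.
subst j; have M'k1 : nth 0 (psi_step f M) k.+1 = (nth 0 M k.+1).-1.
  by rewrite nth_psi_step -/k eqxx.
have [ltNM'|geNM'] := ltnP (nth 0 N k.+1) (nth 0 (psi_step f M) k.+1).
  by right; apply: (@invlex_lt_at _ _ k.+1).
apply: (@invlex_le_sumn_le_nth _ _ k) => // [i ki|].
  have [->|ik] := eqVneq i k.+1; last by apply: eq_above'; rewrite ltn_neqAle eq_sym ik ki.
  by move: geNM' ltNMj; rewrite M'k1; lia.
rewrite nth_psi_step -/k ltn_eqF // eqxx.
have := f_growth.2 (sumn M); lia.
Qed.

Lemma psi_mono M N : sumn N <= sumn M -> invlex_le N M -> psi f N <= psi f M.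
Proof.
elim/(well_founded_ind invlex_lt_wf): M N => M IHM N le_sumn [<- //|ltNM].
have eq_size := invlex_lt_size ltNM.
have [eqNM|neqNM] := eqVneq (behead N) (behead M).
  case TM: (terminal M).
    by rewrite !psi_terminal // (terminal_behead eqNM).
  have TN : terminal N = false by rewrite (terminal_behead eqNM).
  rewrite psiE TN (psiE f M) TM; apply: IHM; first exact: psi_step_lt.
    by rewrite !sumn_psi_step //; have := f_growth.1 _ _ le_sumn; lia.
  exact: invlex_le_psi_step_behead.
have [j [j0 ltNMj eq_above]] := invlex_lt_behead_neq ltNM neqNM.
have TM : terminal M = false.
  by apply: (terminal_nth j0); rewrite -lt0n (leq_ltn_trans (leq0n _) ltNMj).
rewrite (psiE f M) TM; apply: IHM; first exact: psi_step_lt.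
  exact: leq_trans le_sumn (leq_sumn_psi_step TM).
exact: invlex_le_psi_step ltNMj eq_above.
Qed.

End PsiStep.

Theorem proposition3p13 (f : nat -> nat) (d : nat) (N M : seq nat) :
  growth f -> 0 < d -> size N = d -> size M = d ->
  sumn N <= sumn M -> invlex_le N M ->
  psi f N <= psi f M.
Proof. by move=> f_growth _ _ _; apply: psi_mono. Qed.
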